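(* Let $(\gamma_n)$ be a sequence of positive reals satisfying conditions (C1)–(C7) below, with associated polynomials $p_n$ and operators $K^n_t$. Then for all $f,g\in C^\infty_{\mathbb{R}\to\mathbb{C}}$ and all $n\in\mathbb{N}$, \[ \frac{d}{dt}\left[\sum_{m=0}^n K^m_t[f(t)]\,K^m_t[g(t)]\right]=\gamma_n\bigl(K^{n+1}_t[f(t)]\,K^n_t[g(t)]+K^n_t[f(t)]\,K^{n+1}_t[g(t)]\bigr). \]
   Context: Given positive reals $\gamma_n$, set $\gamma_{-1}=1$, $p_{-1}=0$, $p_0=1$ and $\gamma_n p_{n+1}(\omega)=\omega p_n(\omega)-\gamma_{n-1}p_{n-1}(\omega)$ ($n\ge0$). Let $\Delta_n=\gamma_{n+1}-\gamma_n$, $\Delta^2_n=\Delta_{n+1}-\Delta_n$. Conditions: (C1) $\gamma_n\to\infty$; (C2) $\Delta_n\to0$; (C3) there exist $n_0,m_0$ with $\gamma_{n+m}>\gamma_n$ for all $n\ge n_0$, $m\ge m_0$; (C4) $\sum 1/\gamma_j=\infty$; (C5) some $\kappa>1$ has $\sum\gamma_j^{-\kappa}<\infty$; (C6) $\sum|\Delta_n|/\gamma_n^2<\infty$; (C7) $\sum|\Delta^2_n|/\gamma_n<\infty$. $C^\infty_{\mathbb{R}\to\mathbb{C}}$ is the set of functions $\mathbb{R}\to\mathbb{C}$ whose real and imaginary parts are infinitely differentiable. The operators are $K^n_t=(-i)^n p_n\!\left(i\frac{d}{dt}\right)$. *)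

From Stdlib Require Import Reals.
From Coquelicot Require Import Coquelicot.
Open Scope R_scope.

(* A polynomial with real coefficients is represented by its coefficient
   sequence: [c k] is the coefficient of omega^k. *)
Definition rpoly := nat -> R.

Definition polyX (p : rpoly) : rpoly :=
  fun k => match k with O => 0 | S k' => p k' end.

(* gamma_{n-1} with the convention gamma_{-1} = 1 *)
Definition gprev (gam : nat -> R) (n : nat) : R :=
  match n with O => 1 | S n' => gam n' end.

(* ppair gam n = (p_{n-1}, p_n), with p_{-1} = 0, p_0 = 1 and
   gamma_n p_{n+1} = omega p_n - gamma_{n-1} p_{n-1}. *)
Fixpoint ppair (gam : nat -> R) (n : nat) : rpoly * rpoly :=
  match n with
  | O => (fun _ => 0, fun k => match k with O => 1 | S _ => 0 end)
  | S n' =>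
      let (a, b) := ppair gam n' in
      (b, fun k => (polyX b k - gprev gam n' * a k) / gam n')
  end.

Definition pcoef (gam : nat -> R) (n : nat) : rpoly := snd (ppair gam n).

Definition Cderive_n (f : R -> C) (k : nat) (t : R) : C :=
  (Derive_n (fun s => fst (f s)) k t, Derive_n (fun s => snd (f s)) k t).

Definition smoothC (f : R -> C) : Prop :=
  forall (k : nat) (t : R),
    ex_derive_n (fun s => fst (f s)) k t /\ ex_derive_n (fun s => snd (f s)) k t.

(* K^n_t [f(t)] = (-i)^n p_n(i d/dt) f (t)
   = (-i)^n * sum_{k=0}^{n} (coef_k p_n) i^k f^{(k)}(t)  (deg p_n <= n) *)
Definition Kop (gam : nat -> R) (n : nat) (f : R -> C) (t : R) : C :=
  Cmult (Cpow (Copp Ci) n)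
    (sum_n (fun k => Cmult (RtoC (pcoef gam n k))
                           (Cmult (Cpow Ci k) (Cderive_n f k t))) n).

Definition Delta (gam : nat -> R) (n : nat) : R := gam (S n) - gam n.
Definition Delta2 (gam : nat -> R) (n : nat) : R :=
  Delta gam (S n) - Delta gam n.

Definition cond_C1 (gam : nat -> R) : Prop := is_lim_seq gam p_infty.
Definition cond_C2 (gam : nat -> R) : Prop := is_lim_seq (Delta gam) 0.
Definition cond_C3 (gam : nat -> R) : Prop :=
  exists n0 m0 : nat, forall n m : nat, (n0 <= n)%nat -> (m0 <= m)%nat ->
    gam (n + m)%nat > gam n.
Definition cond_C4 (gam : nat -> R) : Prop :=
  is_lim_seq (sum_n (fun j => / gam j)) p_infty.
Definition cond_C5 (gam : nat -> R) : Prop :=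
  exists kappa : R, kappa > 1 /\ ex_series (fun j => / Rpower (gam j) kappa).
Definition cond_C6 (gam : nat -> R) : Prop :=
  ex_series (fun n => Rabs (Delta gam n) / (gam n) ^ 2).
Definition cond_C7 (gam : nat -> R) : Prop :=
  ex_series (fun n => Rabs (Delta2 gam n) / gam n).

(* Substituting omega := i d/dt into the three-term recurrence and multiplying by
   (-i)^(n+1) gives the ladder relation
     d/dt K^n = gamma_n K^(n+1) - gamma_(n-1) K^(n-1)      (K^(-1) = 0).
   By the product rule, d/dt (K^m f K^m g) is then F_m - F_(m-1), where
   F_m := gamma_m (K^(m+1) f K^m g + K^m f K^(m+1) g) and F_(-1) = 0, so the sum
   over m <= n telescopes to F_n. *)

From Stdlib Require Import Reals Lia.
From Coquelicot Require Import Coquelicot.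
Open Scope R_scope.

Definition is_derive_C (F : R -> C) (t : R) (d : C) : Prop :=
  is_derive (fun s => fst (F s)) t (fst d) /\ is_derive (fun s => snd (F s)) t (snd d).

Lemma is_derive_C_ext F G t d :
  (forall s, F s = G s) -> is_derive_C F t d -> is_derive_C G t d.
Proof.
  intros E [H1 H2]; split.
  - apply is_derive_ext with (f := fun s => fst (F s)); [intros s; now rewrite E|exact H1].
  - apply is_derive_ext with (f := fun s => snd (F s)); [intros s; now rewrite E|exact H2].
Qed.

Lemma is_derive_C_const (z : C) t : is_derive_C (fun _ => z) t 0%C.
Proof. split; apply (@is_derive_const R_AbsRing R_NormedModule). Qed.

Lemma is_derive_C_plus F G t dF dG :
  is_derive_C F t dF -> is_derive_C G t dG ->
  is_derive_C (fun s => F s + G s)%C t (dF + dG)%C.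
Proof.
  intros [HF1 HF2] [HG1 HG2]; split.
  - exact (is_derive_plus _ _ _ _ _ HF1 HG1).
  - exact (is_derive_plus _ _ _ _ _ HF2 HG2).
Qed.

Lemma is_derive_C_mult F G t dF dG :
  is_derive_C F t dF -> is_derive_C G t dG ->
  is_derive_C (fun s => F s * G s)%C t (dF * G t + F t * dG)%C.
Proof.
  intros [HF1 HF2] [HG1 HG2]; split; simpl.
  - pose proof (is_derive_minus _ _ _ _ _ (Derive.is_derive_mult _ _ _ _ _ HF1 HG1)
                  (Derive.is_derive_mult _ _ _ _ _ HF2 HG2)) as H.
    unfold minus, plus, opp in H; simpl in H.
    replace (_ + _) with (fst dF * fst (G t) + fst (F t) * fst dG +
      - (snd dF * snd (G t) + snd (F t) * snd dG)) by ring.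
    exact H.
  - pose proof (is_derive_plus _ _ _ _ _ (Derive.is_derive_mult _ _ _ _ _ HF1 HG2)
                  (Derive.is_derive_mult _ _ _ _ _ HF2 HG1)) as H.
    unfold plus in H; simpl in H.
    replace (_ + _) with (fst dF * snd (G t) + fst (F t) * snd dG +
      (snd dF * fst (G t) + snd (F t) * fst dG)) by ring.
    exact H.
Qed.

Lemma is_derive_C_scal (z : C) F t dF :
  is_derive_C F t dF -> is_derive_C (fun s => z * F s)%C t (z * dF)%C.
Proof.
  intros H.
  replace (z * dF)%C with (0 * F t + z * dF)%C by ring.
  exact (is_derive_C_mult _ _ _ _ _ (is_derive_C_const z t) H).
Qed.

Lemma is_derive_C_sum_n (u : nat -> R -> C) (du : nat -> C) t N :
  (forall k, is_derive_C (u k) t (du k)) ->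
  is_derive_C (fun s => sum_n (fun k => u k s) N) t (sum_n du N).
Proof.
  intros H; induction N as [|N IH].
  - rewrite sum_O; apply is_derive_C_ext with (F := u 0%nat); [intros s; now rewrite sum_O|].
    apply H.
  - rewrite sum_Sn.
    apply is_derive_C_ext with (F := fun s => (sum_n (fun k => u k s) N + u (S N) s)%C);
      [intros s; now rewrite sum_Sn|].
    apply is_derive_C_plus; [exact IH|apply H].
Qed.

Lemma is_derive_C_sum_n_telescope (u : nat -> R -> C) (a : nat -> C) t :
  is_derive_C (u 0%nat) t (a 0%nat) ->
  (forall m, is_derive_C (u (S m)) t (a (S m) - a m)%C) ->
  forall n, is_derive_C (fun s => sum_n (fun m => u m s) n) t (a n).
Proof.
  intros H0 HS n; induction n as [|n IH].
  - apply is_derive_C_ext with (F := u 0%nat); [intros s; now rewrite sum_O|exact H0].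
  - apply is_derive_C_ext with (F := fun s => (sum_n (fun m => u m s) n + u (S n) s)%C);
      [intros s; now rewrite sum_Sn|].
    replace (a (S n)) with (a n + (a (S n) - a n))%C by ring.
    apply is_derive_C_plus; [exact IH|apply HS].
Qed.

Lemma is_derive_of_is_derive_C F t d :
  is_derive_C F t d -> @is_derive R_AbsRing C_R_NormedModule F t d.
Proof.
  intros [H1 H2].
  apply is_derive_ext with (f := fun s => (fst (F s), snd (F s))).
  { intros s; now destruct (F s). }
  eapply filterdiff_ext_lin.
  - apply (filterdiff_comp'_2 (fun s => fst (F s)) (fun s => snd (F s))
            (fun u v => (u, v) : C_R_NormedModule) t _ _ (fun u v => (u, v)) H1 H2).
    eapply filterdiff_ext_lin.
    + apply filterdiff_ext with (f := fun y => y); [intros [x y]; reflexivity|].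
      apply filterdiff_id.
    + intros [x y]; reflexivity.
  - intros y; now destruct d.
Qed.

Lemma is_derive_C_Cderive_n f k t :
  smoothC f -> is_derive_C (Cderive_n f k) t (Cderive_n f (S k) t).
Proof.
  intros Hf; destruct (Hf (S k) t) as [H1 H2]; split; apply Derive_correct; assumption.
Qed.

Lemma Ci_sqr : (Ci * Ci = -1)%C.
Proof. apply injective_projections; simpl; ring. Qed.

Definition pprev (gam : nat -> R) (n : nat) : rpoly := fst (ppair gam n).

Lemma pprev_S gam m : pprev gam (S m) = pcoef gam m.
Proof. unfold pcoef, pprev; simpl; now destruct (ppair gam m). Qed.

Lemma pcoef_S gam m k :
  pcoef gam (S m) k = (polyX (pcoef gam m) k - gprev gam m * pprev gam m k) / gam m.
Proof. unfold pcoef, pprev; simpl; now destruct (ppair gam m). Qed.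

Lemma pcoef_deg gam m k : (m < k)%nat -> pcoef gam m k = 0.
Proof.
  revert k.
  enough (H : (forall k, (m < k)%nat -> pcoef gam m k = 0) /\
              (forall k, (m <= k)%nat -> pprev gam m k = 0)) by apply H.
  induction m as [|m [IHc IHp]].
  - split; intros [|k] Hk; simpl; reflexivity || lia.
  - split; intros k Hk.
    + destruct k as [|k]; [lia|].
      rewrite pcoef_S; simpl; rewrite IHc, IHp by lia; unfold Rdiv; ring.
    + rewrite pprev_S; apply IHc; lia.
Qed.

(* [peval c N d] is p(i d/dt) applied to f at t, for p with coefficients [c] and
   degree at most N, where [d k] stands for f^(k)(t). *)
Definition peval (c : rpoly) (N : nat) (d : nat -> C) : C :=
  sum_n (fun k => RtoC (c k) * (Ci ^ k * d k))%C N.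

Definition derivs (f : R -> C) (t : R) (k : nat) : C := Cderive_n f k t.

Lemma Kop_peval gam n f t :
  Kop gam n f t = ((- Ci) ^ n * peval (pcoef gam n) n (derivs f t))%C.
Proof. reflexivity. Qed.

Lemma peval_O c d : peval c 0 d = (RtoC (c 0%nat) * d 0%nat)%C.
Proof. unfold peval; rewrite sum_O; simpl; ring. Qed.

Lemma peval_S c N d :
  peval c (S N) d = (peval c N d + RtoC (c (S N)) * (Ci ^ S N * d (S N)))%C.
Proof. unfold peval; now rewrite sum_Sn. Qed.

Lemma peval_scal u c N d : peval (fun k => u * c k) N d = (RtoC u * peval c N d)%C.
Proof.
  induction N as [|N IH].
  - rewrite !peval_O, RtoC_mult; ring.
  - rewrite !peval_S, IH, RtoC_mult; ring.
Qed.

Lemma peval_minus a c N d :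
  peval (fun k => a k - c k) N d = (peval a N d - peval c N d)%C.
Proof.
  induction N as [|N IH].
  - rewrite !peval_O, RtoC_minus; ring.
  - rewrite !peval_S, IH, RtoC_minus; ring.
Qed.

Lemma peval_polyX c N d :
  peval (polyX c) (S N) d = (Ci * peval c N (fun k => d (S k)))%C.
Proof.
  induction N as [|N IH].
  - rewrite peval_S, !peval_O; cbn [polyX Cpow]; ring.
  - rewrite peval_S, IH, peval_S; cbn [polyX Cpow]; ring.
Qed.

Lemma peval_trunc c N d : c (S N) = 0 -> peval c (S N) d = peval c N d.
Proof. intros Hc; rewrite peval_S, Hc; ring. Qed.

Lemma is_derive_C_peval c N f t : smoothC f ->
  is_derive_C (fun s => peval c N (derivs f s)) t (peval c N (fun k => derivs f t (S k))).
Proof.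
  intros Hf; apply is_derive_C_sum_n with (u := fun k s => (RtoC (c k) * (Ci ^ k * derivs f s k))%C).
  intros k; apply is_derive_C_scal, is_derive_C_scal, is_derive_C_Cderive_n, Hf.
Qed.

Lemma peval_ext a c N d : (forall k, a k = c k) -> peval a N d = peval c N d.
Proof. intros H; unfold peval; apply sum_n_ext; intros k; now rewrite H. Qed.

Lemma peval_pcoef_S gam m N d : gam m <> 0 ->
  (RtoC (gam m) * peval (pcoef gam (S m)) N d)%C =
  (peval (polyX (pcoef gam m)) N d - RtoC (gprev gam m) * peval (pprev gam m) N d)%C.
Proof.
  intros Hg; rewrite <- !peval_scal, <- peval_minus.
  apply peval_ext; intros k; rewrite pcoef_S; field; exact Hg.
Qed.

(* K^(n-1), with K^(-1) = 0 *)
Definition Kprev (gam : nat -> R) (n : nat) (f : R -> C) (t : R) : C :=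
  match n with O => 0%C | S n' => Kop gam n' f t end.

Lemma Kprev_peval gam m f t :
  Kprev gam m f t = (- (- Ci) ^ S m * peval (pprev gam m) (S m) (derivs f t))%C.
Proof.
  destruct m as [|m].
  - rewrite peval_S, peval_O; unfold pprev; simpl; ring.
  - cbn [Kprev]; rewrite pprev_S, !peval_trunc by (apply pcoef_deg; lia).
    rewrite Kop_peval; cbn [Cpow]; ring [Ci_sqr].
Qed.

Lemma Kop_S gam m f t : gam m <> 0 ->
  (RtoC (gam m) * Kop gam (S m) f t)%C =
  ((- Ci) ^ m * peval (pcoef gam m) m (fun k => derivs f t (S k))
   + RtoC (gprev gam m) * Kprev gam m f t)%C.
Proof.
  intros Hg; rewrite Kprev_peval, Kop_peval.
  transitivity ((- Ci) ^ S m * (RtoC (gam m) * peval (pcoef gam (S m)) (S m) (derivs f t)))%C;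
    [ring|].
  rewrite peval_pcoef_S, peval_polyX by exact Hg; cbn [Cpow]; ring [Ci_sqr].
Qed.

Lemma is_derive_C_Kop gam m f t : gam m <> 0 -> smoothC f ->
  is_derive_C (Kop gam m f) t
    (RtoC (gam m) * Kop gam (S m) f t - RtoC (gprev gam m) * Kprev gam m f t)%C.
Proof.
  intros Hg Hf; rewrite Kop_S by exact Hg.
  replace (_ + _ - _)%C
    with ((- Ci) ^ m * peval (pcoef gam m) m (fun k => derivs f t (S k)))%C by ring.
  apply (is_derive_C_scal _ (fun s => peval (pcoef gam m) m (derivs f s))).
  apply is_derive_C_peval, Hf.
Qed.

Lemma is_derive_C_eq F t a b : is_derive_C F t a -> a = b -> is_derive_C F t b.
Proof. now intros H <-. Qed.

Definition Kflux (gam : nat -> R) (n : nat) (f g : R -> C) (t : R) : C :=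
  (RtoC (gam n) * (Kop gam (S n) f t * Kop gam n g t + Kop gam n f t * Kop gam (S n) g t))%C.

Section KopProducts.

Variables (gam : nat -> R) (f g : R -> C) (t : R).
Hypotheses (gam_neq0 : forall n, gam n <> 0) (hf : smoothC f) (hg : smoothC g).

Lemma is_derive_C_Kop_mult_O :
  is_derive_C (fun s => Kop gam 0 f s * Kop gam 0 g s)%C t (Kflux gam 0 f g t).
Proof.
  eapply is_derive_C_eq;
    [apply is_derive_C_mult; apply is_derive_C_Kop; auto|unfold Kflux; simpl; ring].
Qed.

Lemma is_derive_C_Kop_mult_S m :
  is_derive_C (fun s => Kop gam (S m) f s * Kop gam (S m) g s)%C t
    (Kflux gam (S m) f g t - Kflux gam m f g t)%C.
Proof.
  eapply is_derive_C_eq;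
    [apply is_derive_C_mult; apply is_derive_C_Kop; auto|unfold Kflux; simpl; ring].
Qed.

End KopProducts.

Theorem lemma28 (gam : nat -> R) (hpos : forall n, 0 < gam n)
  (h1 : cond_C1 gam) (h2 : cond_C2 gam) (h3 : cond_C3 gam) (h4 : cond_C4 gam)
  (h5 : cond_C5 gam) (h6 : cond_C6 gam) (h7 : cond_C7 gam)
  (f g : R -> C) (hf : smoothC f) (hg : smoothC g) (n : nat) (t : R) :
  @is_derive R_AbsRing C_R_NormedModule
    (fun s => sum_n (fun m => Cmult (Kop gam m f s) (Kop gam m g s)) n) t
    (Cmult (RtoC (gam n))
       (Cplus (Cmult (Kop gam (S n) f t) (Kop gam n g t))
              (Cmult (Kop gam n f t) (Kop gam (S n) g t)))).
Proof.
  assert (gam_neq0 : forall k, gam k <> 0) by (intros k; apply Rgt_not_eq, hpos).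
  apply is_derive_of_is_derive_C.
  apply (is_derive_C_sum_n_telescope (fun m s => Kop gam m f s * Kop gam m g s)%C
           (fun m => Kflux gam m f g t)).
  - now apply is_derive_C_Kop_mult_O.
  - intros m; now apply is_derive_C_Kop_mult_S.
Qed.
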